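(* Let $(G,\prec)$ be a POP-graph and $e_1,e_2,e,e'\in E(G)$. (1) If $e_1\to e$, $e_2\to e$ and $e_1\prec e'\prec e_2$, then $e_1\not\to e'$ implies $e'\to e$. (2) If $e\to e_1$, $e\to e_2$ and $e_1\prec e'\prec e_2$, then $e'\not\to e_2$ implies $e\to e'$.
   Context: A progressive graph is a finite directed acyclic graph (parallel edges allowed) in which every source and every sink has degree one. For edges write $e\to e'$ if $e\neq e'$ and there is a directed path whose first edge is $e$ and last edge is $e'$. A planar order on $G$ is a linear order $\prec$ on $E(G)$ such that (P1) $e_1\to e_2$ implies $e_1\prec e_2$; (P2) if $e_1\prec e_2\prec e_3$ and $e_1\to e_3$ then $e_1\to e_2$ or $e_2\to e_3$. A POP-graph is a progressive graph with a planar order. *)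

From mathcomp Require Import all_boot.
Set Implicit Arguments. Unset Strict Implicit. Unset Printing Implicit Defensive.

(* A finite directed graph with parallel edges: finite vertex type V, finite
   edge type E, each edge f going from [src f] to [tgt f]. *)

Section Graph.
Variables (V E : finType) (src tgt : E -> V).

Definition adj : rel E := fun f g => tgt f == src g.

Definition arrow (e e' : E) : bool := (e != e') && connect adj e e'.

Definition indeg (v : V) : nat := #|[set f | tgt f == v]|.
Definition outdeg (v : V) : nat := #|[set f | src f == v]|.

Definition acyclic : Prop := forall f g : E, adj f g -> ~~ connect adj g f.

Definition progressive : Prop :=
  [/\ acyclic,
      forall v, indeg v = 0 -> indeg v + outdeg v = 1
    & forall v, outdeg v = 0 -> indeg v + outdeg v = 1].

Definition strict_linear_order (lt : rel E) : Prop :=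
  [/\ irreflexive lt, transitive lt & forall x y, x != y -> lt x y || lt y x].

Definition planar_order (lt : rel E) : Prop :=
  [/\ strict_linear_order lt,
      (forall e1 e2, arrow e1 e2 -> lt e1 e2)
    & (forall e1 e2 e3, lt e1 e2 -> lt e2 e3 -> arrow e1 e3 ->
         arrow e1 e2 || arrow e2 e3)].

End Graph.

From mathcomp Require Import all_boot.
Set Implicit Arguments. Unset Strict Implicit. Unset Printing Implicit Defensive.

(* By (P1) and
   transitivity, e' lies strictly between the two ends of the path e1 -> e
   (resp. e -> e2); (P2) then splits that path at e', and the excluded
   alternative leaves the claimed arrow. *)

Section PlanarOrder.
Variables (V E : finType) (src tgt : E -> V) (lt : rel E).
Hypothesis planar : planar_order src tgt lt.

Local Notation arr := (arrow src tgt).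

Lemma lt_irr e : ~~ lt e e.
Proof. by case: planar => [[irr _ _] _ _]; rewrite irr. Qed.

Lemma lt_trans : transitive lt.
Proof. by case: planar => [[_ tr _] _ _]. Qed.

Lemma lt_total e e' : e != e' -> lt e e' || lt e' e.
Proof. by case: planar => [[_ _ tot] _ _]; apply: tot. Qed.

Lemma arrow_lt e e' : arr e e' -> lt e e'.
Proof. by case: planar => [_ P1 _]; apply: P1. Qed.

Lemma arrow_between e1 e2 e3 :
  lt e1 e2 -> lt e2 e3 -> arr e1 e3 -> arr e1 e2 || arr e2 e3.
Proof. by case: planar => [_ _ P2]; apply: P2. Qed.

Lemma arrow_into_between e1 e2 e e' :
  arr e1 e -> arr e2 e -> lt e1 e' -> lt e' e2 -> ~~ arr e1 e' -> arr e' e.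
Proof.
move=> e1e e2e lt1' lt'2 /negbTE n1'.
have lt'e : lt e' e.
  case: (eqVneq e' e) => [Ee' | ne]; first by rewrite Ee' e1e in n1'.
  case/orP: (lt_total ne) => // lte'.
  have lt'' := lt_trans lt'2 (lt_trans (arrow_lt e2e) lte').
  by rewrite (negbTE (lt_irr e')) in lt''.
by case/orP: (arrow_between lt1' lt'e e1e); rewrite ?n1'.
Qed.

Lemma arrow_from_between e1 e2 e e' :
  arr e e1 -> arr e e2 -> lt e1 e' -> lt e' e2 -> ~~ arr e' e2 -> arr e e'.
Proof.
move=> ee1 ee2 lt1' lt'2 /negbTE n'2.
have lte' : lt e e' := lt_trans (arrow_lt ee1) lt1'.
by case/orP: (arrow_between lte' lt'2 ee2); rewrite ?n'2.
Qed.

End PlanarOrder.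

Theorem lemma3p1 (V E : finType) (src tgt : E -> V) (lt : rel E)
  (Hprog : progressive src tgt) (Hpo : planar_order src tgt lt)
  (e1 e2 e e' : E) :
  (arrow src tgt e1 e -> arrow src tgt e2 e -> lt e1 e' -> lt e' e2 ->
     ~~ arrow src tgt e1 e' -> arrow src tgt e' e) /\
  (arrow src tgt e e1 -> arrow src tgt e e2 -> lt e1 e' -> lt e' e2 ->
     ~~ arrow src tgt e' e2 -> arrow src tgt e e').
Proof.
split; [exact: arrow_into_between | exact: arrow_from_between].
Qed.
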